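(* Let $\theta\in(0,1)$ be irrational, $\tau=1$, $k\ge1$ even, and $b\ge1$ an integer with $\frac1{(b+1)(b+2)}\le q_k\|q_k\theta\|<\frac1{b(b+1)}$. Then $$\bigcup_{i=1}^{q_k}\Big(i\theta-\frac1{q_{k+1}},\;i\theta+(b-1)\|q_k\theta\|+\frac1{(b+1)q_k}\Big)\subset F_k.$$
   Context: $\mathbb T=\mathbb R/\mathbb Z$, points identified with fractional parts; $(x-a,x+b)$ denotes the projection to $\mathbb T$ of the real interval. $\|t\|$ is the distance to the nearest integer; $B(x,r)$ the open ball in $\mathbb T$. $q_k$ are the convergent denominators of $\theta=[0;a_1,a_2,\dots]$ ($q_0=1$, $q_{k+1}=a_{k+1}q_k+q_{k-1}$). With $\tau=1$: $G_n=\bigcup_{i=1}^nB(i\theta,n^{-1})$ and $F_k=\bigcap_{n=q_k+1}^{q_{k+1}}G_n$. *)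

From Stdlib Require Import Reals Lra Lia ZArith.
Open Scope R_scope.

Definition dist_int (t : R) : R := Rmin (frac_part t) (1 - frac_part t).

Definition irrational (x : R) : Prop :=
  forall (p : Z) (r : Z), r <> 0%Z -> x <> IZR p / IZR r.

Fixpoint cf_x (theta : R) (n : nat) : R :=
  match n with
  | O => theta
  | S m => frac_part (/ cf_x theta m)
  end.

(* Partial quotients: a_{n+1} = floor (1 / cf_x n), so theta = [0; a_1, a_2, ...]. *)
Definition cf_a (theta : R) (n : nat) : nat :=
  match n with
  | O => O
  | S m => Z.to_nat (Int_part (/ cf_x theta m))
  end.

(* (q_n, q_{n-1}) with q_0 = 1, q_{-1} = 0, q_{n+1} = a_{n+1} q_n + q_{n-1}. *)
Fixpoint qpair (theta : R) (n : nat) : nat * nat :=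
  match n with
  | O => (1%nat, 0%nat)
  | S m => let (qm, qm1) := qpair theta m in (cf_a theta (S m) * qm + qm1, qm)%nat
  end.

Definition q (theta : R) (n : nat) : nat := fst (qpair theta n).

(* Subsets of T = R/Z represented as predicates on R (1-periodic ones). *)
Definition ballT (x r : R) (y : R) : Prop := dist_int (y - x) < r.

Definition G (theta : R) (n : nat) (y : R) : Prop :=
  exists i : nat, (1 <= i <= n)%nat /\ ballT (INR i * theta) (/ INR n) y.

Definition F (theta : R) (k : nat) (y : R) : Prop :=
  forall n : nat, (q theta k + 1 <= n <= q theta (S k))%nat -> G theta n y.

(* Projection to T of the real interval (lo, hi): y lies in it iff some integer
   translate of y lies in (lo, hi). *)
Definition projInt (lo hi : R) (y : R) : Prop :=
  exists m : Z, lo < y + IZR m < hi.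

From Stdlib Require Import Reals ZArith Lra Lia Psatz.
Open Scope R_scope.

(* Write Q = q_k, N = q_(k+1) and delta = q_k theta - p_k, which is positive and
   equal to ||q_k theta|| because k is even.  Then (i + m Q) theta = i theta + m delta
   mod 1, so the points i theta, (i+Q) theta, ..., (i+(t-1)Q) theta with
   t = floor(n/Q) are all among the first n multiples of theta and form a progression
   of step delta < 1/N <= 1/n.  Their 1/n-balls cover (i theta - 1/n, i theta +
   (t-1) delta + 1/n), and 1/n > 1/((t+1)Q).  Finally the hypothesis on Q delta says
   exactly that t |-> (t-1) delta + 1/((t+1)Q) is minimal at t = b. *)

Lemma dist_int_le_abs (t : R) (w : Z) : dist_int t <= Rabs (t + IZR w).
Proof.
  unfold dist_int, frac_part. destruct (base_Int_part t) as [Hfl Hfl'].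
  replace (t + IZR w) with ((t - IZR (Int_part t)) + IZR (Int_part t + w))
    by (rewrite plus_IZR; ring).
  destruct (Z_lt_le_dec (Int_part t + w) 0) as [Hneg|Hnneg].
  - assert (IZR (Int_part t + w) <= -1) by (apply IZR_le; lia).
    eapply Rle_trans; [apply Rmin_r|]. split_Rabs; lra.
  - assert (0 <= IZR (Int_part t + w)) by (apply IZR_le; lia).
    eapply Rle_trans; [apply Rmin_l|]. split_Rabs; lra.
Qed.

Lemma dist_int_IZR_add (z : Z) (d : R) : 0 <= d <= / 2 -> dist_int (IZR z + d) = d.
Proof.
  intros Hd.
  destruct (Int_part_frac_part_spec (IZR z + d) z d) as [_ Hfrac]; [lra|reflexivity|].
  unfold dist_int. rewrite <- Hfrac. apply Rmin_left. lra.
Qed.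

Lemma ballT_of_lift (x r y : R) (w : Z) : Rabs (y - x + IZR w) < r -> ballT x r y.
Proof. intros Hlt. eapply Rle_lt_trans; [apply dist_int_le_abs | exact Hlt]. Qed.

Definition reach (delta : R) (Q t : nat) : R :=
  (INR t - 1) * delta + / ((INR t + 1) * INR Q).

Lemma reach_minimal_at (delta : R) (Q b t : nat) :
  (0 < Q)%nat -> (1 <= b)%nat ->
  / ((INR b + 1) * (INR b + 2)) <= INR Q * delta ->
  INR Q * delta < / (INR b * (INR b + 1)) ->
  reach delta Q b <= reach delta Q t.
Proof.
  intros HQ Hb Hlo Hhi.
  assert (HQr : 0 < INR Q) by (apply lt_0_INR; lia).
  assert (HB : 1 <= INR b) by (apply (le_INR 1); lia).
  assert (HT : 0 <= INR t) by apply pos_INR.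
  set (w := / ((INR t + 1) * (INR b + 1))).
  assert (Hdiff : reach delta Q t - reach delta Q b
                  = (INR t - INR b) * (INR Q * delta - w) * / INR Q).
  { unfold reach, w. field. lra. }
  cut (0 <= (INR t - INR b) * (INR Q * delta - w)).
  { intros Hprod. assert (0 < / INR Q) by (apply Rinv_0_lt_compat; lra). nra. }
  destruct (lt_eq_lt_dec t b) as [[Hlt| ->]|Hgt].
  - assert (Hw : / (INR b * (INR b + 1)) <= w).
    { apply Rinv_le_contravar; [nra|].
      assert (INR t + 1 <= INR b) by (rewrite <- S_INR; apply le_INR; lia). nra. }
    assert (INR t < INR b) by (apply lt_INR; lia). nra.
  - lra.
  - assert (Hw : w <= / ((INR b + 1) * (INR b + 2))).
    { apply Rinv_le_contravar; [nra|].
      assert (INR b + 2 <= INR t + 1)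
        by (replace (INR b + 2) with (INR (S b) + 1) by (rewrite S_INR; ring);
            apply Rplus_le_compat_r, le_INR; lia). nra. }
    assert (INR b < INR t) by (apply lt_INR; lia). nra.
Qed.

(* m = min (floor (u / delta), s), obtained without floors by induction on s. *)
Lemma capped_floor_exists (u delta : R) (s : nat) : 0 <= u ->
  exists m, (m <= s)%nat /\ INR m * delta <= u /\ (u < (INR m + 1) * delta \/ m = s).
Proof.
  intros Hu. induction s as [|s IH].
  - exists 0%nat. simpl. repeat split; [lia|lra|right; reflexivity].
  - destruct IH as [m [Hms [Hmu [Hlt | ->]]]].
    + exists m. repeat split; [lia|exact Hmu|left; exact Hlt].
    + destruct (Rlt_le_dec u ((INR s + 1) * delta)) as [Hlt|Hge].
      * exists s. repeat split; [lia|exact Hmu|left; exact Hlt].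
      * exists (S s). rewrite S_INR. repeat split; [lia|exact Hge|right; reflexivity].
Qed.

Section Covering.

Variables (theta delta : R) (Q N : nat) (z : Z).
Hypothesis Q_theta : INR Q * theta = IZR z + delta.
Hypothesis delta_N : delta * INR N < 1.

Lemma ballT_progression (i m : nat) (r y : R) (w : Z) :
  Rabs (y + IZR w - INR i * theta - INR m * delta) < r ->
  ballT (INR (i + m * Q) * theta) r y.
Proof.
  intros Hlt. apply (ballT_of_lift _ _ _ (w + Z.of_nat m * z)).
  replace (y - INR (i + m * Q) * theta + IZR (w + Z.of_nat m * z))
    with (y + IZR w - INR i * theta - INR m * (INR Q * theta - IZR z))
    by (rewrite plus_IZR, mult_IZR, <- INR_IZR_INZ, plus_INR, mult_INR; ring).
  rewrite Q_theta. replace (IZR z + delta - IZR z) with delta by ring. exact Hlt.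
Qed.

Lemma interval_sub_G (n b i : nat) (y : R) (w : Z) :
  (Q < n <= N)%nat -> (1 <= b)%nat ->
  / ((INR b + 1) * (INR b + 2)) <= INR Q * delta ->
  INR Q * delta < / (INR b * (INR b + 1)) ->
  (1 <= i <= Q)%nat ->
  INR i * theta - / INR N < y + IZR w < INR i * theta + reach delta Q b ->
  G theta n y.
Proof.
  intros Hn Hb Hlo Hhi Hi [Hy_lo Hy_hi].
  assert (Hnr : 0 < INR n) by (apply lt_0_INR; lia).
  assert (HNn : / INR N <= / INR n) by (apply Rinv_le_contravar; [lra|apply le_INR; lia]).
  assert (Hdelta_n : delta < / INR n).
  { assert (0 < INR N) by (apply lt_0_INR; lia).
    apply Rlt_le_trans with (/ INR N); [|exact HNn].
    apply Rmult_lt_reg_r with (INR N); [lra|]. rewrite Rinv_l; lra. }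
  set (u := y + IZR w - INR i * theta).
  destruct (Rle_lt_dec u 0) as [Hu|Hu].
  - exists i. split; [lia|]. apply (ballT_of_lift _ _ _ w).
    replace (y - INR i * theta + IZR w) with u by (unfold u; ring).
    rewrite Rabs_left1; unfold u in *; lra.
  - set (t := (n / Q)%nat).
    assert (HtQ : (Q * t <= n)%nat) by apply Nat.Div0.mul_div_le.
    assert (HnQ : (n < Q * S t)%nat) by (apply Nat.mul_succ_div_gt; lia).
    assert (Ht : (1 <= t)%nat) by nia.
    destruct (capped_floor_exists u delta (t - 1)) as [m [Hmt [Hmu Hcase]]]; [lra|].
    exists (i + m * Q)%nat. split; [nia|].
    apply (ballT_progression _ _ _ _ w). fold u. rewrite Rabs_right by lra.
    destruct Hcase as [Hlt | ->]; [lra|].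
    assert (Hreach := reach_minimal_at delta Q b t ltac:(lia) Hb Hlo Hhi).
    assert (Hlast : / ((INR t + 1) * INR Q) < / INR n).
    { assert (0 < INR Q) by (apply lt_0_INR; lia).
      assert (0 <= INR t) by apply pos_INR.
      apply Rinv_lt_contravar; [apply Rmult_lt_0_compat; nra|].
      apply lt_INR in HnQ. rewrite mult_INR, S_INR in HnQ. lra. }
    unfold reach in Hreach, Hy_hi. rewrite minus_INR by lia. simpl INR. unfold u. lra.
Qed.

End Covering.

Definition qprev (theta : R) (k : nat) : nat := snd (qpair theta k).

(* cf_delta k = x_0 x_1 ... x_k; it equals |q_k theta - p_k| (cf_invariants). *)
Fixpoint cf_delta (theta : R) (k : nat) : R :=
  match k with
  | O => cf_x theta 0
  | S m => cf_delta theta m * cf_x theta (S m)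
  end.

Definition cf_delta_prev (theta : R) (k : nat) : R :=
  match k with
  | O => 1
  | S m => cf_delta theta m
  end.

Lemma q_S (theta : R) (k : nat) :
  q theta (S k) = (cf_a theta (S k) * q theta k + qprev theta k)%nat.
Proof. unfold q, qprev; simpl; destruct (qpair theta k); reflexivity. Qed.

Lemma qprev_S (theta : R) (k : nat) : qprev theta (S k) = q theta k.
Proof. unfold q, qprev; simpl; destruct (qpair theta k); reflexivity. Qed.

Lemma cf_delta_S (theta : R) (k : nat) :
  cf_delta theta (S k) = cf_delta theta k * cf_x theta (S k).
Proof. reflexivity. Qed.

Lemma cf_delta_prevE (theta : R) (k : nat) :
  cf_delta theta k = cf_delta_prev theta k * cf_x theta k.
Proof. destruct k; simpl; ring. Qed.

Lemma cf_x_step (theta : R) (k : nat) : 0 < cf_x theta k < 1 ->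
  (1 <= cf_a theta (S k))%nat /\
  cf_x theta k * (INR (cf_a theta (S k)) + cf_x theta (S k)) = 1 /\
  0 <= cf_x theta (S k) < 1.
Proof.
  intros Hx.
  assert (Hinv : / cf_x theta k > 1) by (rewrite <- Rinv_1; apply Rinv_lt_contravar; lra).
  destruct (base_Int_part (/ cf_x theta k)) as [Hfl Hfl'].
  assert (Hint : (1 <= Int_part (/ cf_x theta k))%Z)
    by (assert (0 < Int_part (/ cf_x theta k))%Z by (apply lt_IZR; lra); lia).
  change (cf_a theta (S k)) with (Z.to_nat (Int_part (/ cf_x theta k))).
  change (cf_x theta (S k)) with (frac_part (/ cf_x theta k)).
  destruct (base_fp (/ cf_x theta k)) as [Hfp Hfp'].
  rewrite INR_IZR_INZ, Z2Nat.id by lia. unfold frac_part.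
  repeat split; try lra; [lia | field; lra].
Qed.

Section ContinuedFraction.

Variable theta : R.
Hypothesis theta_range : 0 < theta < 1.
Hypothesis theta_irrational : irrational theta.

Lemma cf_invariants (k : nat) :
  0 < cf_x theta k < 1 /\ (1 <= q theta k)%nat /\
  (exists z, INR (q theta k) * theta - IZR z = (-1) ^ k * cf_delta theta k) /\
  (exists z, INR (qprev theta k) * theta - IZR z = - (-1) ^ k * cf_delta_prev theta k).
Proof.
  induction k as [|k IH].
  - repeat split; try (simpl; lra); [unfold q; simpl; lia | |].
    + exists 0%Z. unfold q; simpl. ring.
    + exists 1%Z. unfold qprev; simpl. ring.
  - destruct IH as [Hx [Hq [[z1 Hz1] [z2 Hz2]]]].
    destruct (cf_x_step theta k Hx) as [Ha [Hrec Hx1]].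
    set (a := cf_a theta (S k)) in *.
    assert (HqS : (1 <= q theta (S k))%nat) by (rewrite q_S; nia).
    (* a x_k - 1 = - x_k x_(k+1) turns the recurrence for q into one for the errors *)
    assert (Hcong : INR (q theta (S k)) * theta - IZR (Z.of_nat a * z1 + z2)
                    = (-1) ^ S k * cf_delta theta (S k)).
    { rewrite q_S, plus_IZR, mult_IZR, <- INR_IZR_INZ, plus_INR, mult_INR. fold a.
      replace ((INR a * INR (q theta k) + INR (qprev theta k)) * theta
               - (INR a * IZR z1 + IZR z2))
        with (INR a * (INR (q theta k) * theta - IZR z1)
              + (INR (qprev theta k) * theta - IZR z2)) by ring.
      rewrite Hz1, Hz2, cf_delta_S, !cf_delta_prevE. simpl pow.
      replace (- (-1) ^ k * cf_delta_prev theta k)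
        with (- (-1) ^ k * cf_delta_prev theta k
              * (cf_x theta k * (INR a + cf_x theta (S k)))) by (rewrite Hrec; ring).
      ring. }
    assert (Hx1_pos : 0 < cf_x theta (S k)).
    { destruct (proj1 Hx1) as [Hlt|Hzero]; [exact Hlt | exfalso].
      rewrite cf_delta_S, <- Hzero, !Rmult_0_r in Hcong.
      apply (theta_irrational (Z.of_nat a * z1 + z2)%Z (Z.of_nat (q theta (S k)))); [lia|].
      rewrite <- INR_IZR_INZ.
      assert (0 < INR (q theta (S k))) by (apply lt_0_INR; lia).
      field_simplify_eq; lra. }
    repeat split; try lra; [exact HqS | exists (Z.of_nat a * z1 + z2)%Z; exact Hcong |].
    exists z1. rewrite qprev_S, Hz1. simpl. ring.
Qed.

Lemma cf_delta_pos (k : nat) : 0 < cf_delta theta k.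
Proof.
  induction k as [|k IH]; [exact (proj1 (proj1 (cf_invariants 0)))|].
  rewrite cf_delta_S. destruct (cf_invariants (S k)) as [HxS _]. nra.
Qed.

Lemma cf_delta_identity (k : nat) :
  cf_delta_prev theta k * INR (q theta k) + cf_delta theta k * INR (qprev theta k) = 1.
Proof.
  induction k as [|k IH]; [unfold q, qprev; simpl; ring|].
  destruct (cf_invariants k) as [Hx _].
  destruct (cf_x_step theta k Hx) as [_ [Hrec _]].
  rewrite q_S, qprev_S, plus_INR, mult_INR, cf_delta_S, <- IH. cbn [cf_delta_prev].
  rewrite cf_delta_prevE.
  replace (cf_delta_prev theta k * INR (q theta k))
    with (cf_delta_prev theta k * INR (q theta k)
          * (cf_x theta k * (INR (cf_a theta (S k)) + cf_x theta (S k))))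
    by (rewrite Hrec; ring).
  ring.
Qed.

Lemma cf_delta_mul_q_S_lt1 (k : nat) : cf_delta theta k * INR (q theta (S k)) < 1.
Proof.
  assert (Hid := cf_delta_identity (S k)). cbn [cf_delta_prev] in Hid.
  rewrite qprev_S in Hid.
  destruct (cf_invariants k) as [_ [Hq _]].
  assert (1 <= INR (q theta k)) by (apply (le_INR 1); exact Hq).
  assert (Hpos := cf_delta_pos (S k)). nra.
Qed.

Lemma q_S_ge2 (k : nat) : (1 <= k)%nat -> (2 <= q theta (S k))%nat.
Proof.
  intros Hk. destruct k as [|k]; [lia|].
  destruct (cf_invariants (S k)) as [Hx [Hq _]].
  destruct (cf_invariants k) as [_ [Hq' _]].
  destruct (cf_x_step theta (S k) Hx) as [Ha _].
  rewrite q_S, qprev_S. nia.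
Qed.

Lemma q_even_theta (k : nat) : Nat.Even k ->
  exists z, INR (q theta k) * theta = IZR z + cf_delta theta k.
Proof.
  intros [h ->]. destruct (cf_invariants (2 * h)) as [_ [_ [[z Hz] _]]].
  exists z. rewrite pow_1_even in Hz. lra.
Qed.

End ContinuedFraction.

Theorem lemma4p1 (theta : R) (k b : nat) :
  0 < theta < 1 -> irrational theta ->
  (1 <= k)%nat -> Nat.Even k -> (1 <= b)%nat ->
  / ((INR b + 1) * (INR b + 2)) <= INR (q theta k) * dist_int (INR (q theta k) * theta) ->
  INR (q theta k) * dist_int (INR (q theta k) * theta) < / (INR b * (INR b + 1)) ->
  forall y : R,
    (exists i : nat, (1 <= i <= q theta k)%nat /\
       projInt (INR i * theta - / INR (q theta (S k)))
               (INR i * theta + (INR b - 1) * dist_int (INR (q theta k) * theta)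
                  + / ((INR b + 1) * INR (q theta k))) y) ->
    F theta k y.
Proof.
  intros Hth Hirr Hk Hev Hb Hlo Hhi y [i [Hi [w Hw]]] n Hn.
  destruct (q_even_theta theta Hth Hirr k Hev) as [z Hz].
  set (delta := cf_delta theta k) in *.
  assert (Hdelta_pos : 0 < delta) by apply (cf_delta_pos theta Hth Hirr).
  assert (Hdelta_N := cf_delta_mul_q_S_lt1 theta Hth Hirr k). fold delta in Hdelta_N.
  assert (HN : 2 <= INR (q theta (S k)))
    by (apply (le_INR 2), (q_S_ge2 theta Hth Hirr k Hk)).
  assert (Hdist : dist_int (INR (q theta k) * theta) = delta)
    by (rewrite Hz; apply dist_int_IZR_add; nra).
  rewrite Hdist in Hlo, Hhi, Hw.
  apply (interval_sub_G theta delta (q theta k) (q theta (S k)) z Hz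
           Hdelta_N n b i y w); try lia; try assumption.
  unfold reach. lra.
Qed.
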